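(* Let $\mathcal{P}$ be the set of integers $k\ge 2$ such that $T_k(x)=x^k+x+1$ is primitive over $\mathbb{F}_2$. For $k\in\mathcal{P}$, let $U_k$ be the rotation of the cyclic word $M_k$ (defined in the context) that starts with $0^k$, and let $V_k=U_k\,U_k[0..k-2]$. Then $\chi(V_k)/r(V_k)$ approaches $2$ as $k\to\infty$ within $\mathcal{P}$; that is, for every $\varepsilon>0$ there is $k_0$ such that $|\chi(V_k)/r(V_k)-2|<\varepsilon$ for all $k\in\mathcal{P}$ with $k\ge k_0$.
   Context: For $k\in\mathcal{P}$: define $F:\{0,1\}^k\to\{0,1\}^k$ by $F(x_0,\dots,x_{k-1})=(x_1,\dots,x_{k-1},x_0\oplus x_1)$ and let $F'$ agree with $F$ except $F'(0^k)=0^{k-1}1$ and $F'(10^{k-1})=0^k$; $F'$ is a single cycle on all $2^k$ states. Starting from any state $x_0$ with $x_{t+1}=F'(x_t)$, let $w$ be the cyclic word of length $2^k$ with $w[t]$ the first coordinate of $x_t$ (a binary de Bruijn cycle of order $k$); $M_k$ is obtained from $w$ by reversing and complementing every bit. Strings are $0$-indexed. $\$$ is an end-marker smaller than $0,1$, appended once. $r(V)$ is the number of runs (maximal blocks of one repeated symbol) of $\operatorname{BWT}(V\$)$, the last column of the matrix of lexicographically sorted cyclic rotations of $V\$$. For a string $v$, a substring $x$ (possibly empty) is right-maximal if $xa,xb$ are substrings for two distinct symbols $a\neq b$; these $xa$ are the right-extensions. A set $S$ of positions of $v$ is suffixient if every right-extension is a suffix of $v[0..j]$ for some $j\in S$.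 $\chi(V)$ is the minimum size of a suffixient set for $V\$$. *)

From HB Require Import structures.
From mathcomp Require Import all_boot all_order all_algebra all_field.
Set Implicit Arguments. Unset Strict Implicit. Unset Printing Implicit Defensive.
Import Order.TTheory GRing.Theory Num.Theory.

Definition trinomial (k : nat) : {poly 'F_2} := ('X^k + 'X + 1)%R.

Definition primitive_poly (p : {poly 'F_2}) : Prop :=
  let m := (size p).-1 in
  [/\ irreducible_poly p,
      dvdp p ('X^(2 ^ m - 1) - 1)%R
    & forall n, 0 < n < 2 ^ m - 1 -> ~~ dvdp p ('X^n - 1)%R].

Definition inP (k : nat) : Prop := 2 <= k /\ primitive_poly (trinomial k).

(* bits: 0 = false, 1 = true; states are seqs (x_0, ..., x_{k-1}) *)

Definition Fstate (x : seq bool) : seq bool :=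
  rcons (behead x) (addb (nth false x 0) (nth false x 1)).

Definition Fprime (k : nat) (x : seq bool) : seq bool :=
  if x == nseq k false then rcons (nseq k.-1 false) true
  else if x == true :: nseq k.-1 false then nseq k false
  else Fstate x.

Definition wdB (k : nat) : seq bool :=
  [seq head false (iter t (Fprime k) (nseq k false)) | t <- iota 0 (2 ^ k)].

Definition Mk (k : nat) : seq bool := map negb (rev (wdB k)).

Definition Uk (k : nat) : seq bool :=
  let M := Mk k in
  rot (find (fun i => take k (rot i M) == nseq k false) (iota 0 (size M))) M.

Definition Vk (k : nat) : seq bool := Uk k ++ take k.-1 (Uk k).

(* encoding: $ |-> 0, bit 0 |-> 1, bit 1 |-> 2 *)
Definition sym (b : bool) : nat := (nat_of_bool b).+1.
Definition dollar (V : seq bool) : seq nat := rcons (map sym V) 0.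

Fixpoint lexle (s t : seq nat) : bool :=
  match s, t with
  | [::], _ => true
  | _ :: _, [::] => false
  | a :: s', b :: t' => (a < b) || ((a == b) && lexle s' t')
  end.

Definition bwt (S : seq nat) : seq nat :=
  map (last 0) (sort lexle [seq rot i S | i <- iota 0 (size S)]).

Definition runs (s : seq nat) : nat :=
  count (fun i => (i == 0) || (nth 0 s i.-1 != nth 0 s i)) (iota 0 (size s)).

Definition r (V : seq bool) : nat := runs (bwt (dollar V)).

Definition substrings (v : seq nat) : seq (seq nat) :=
  [seq take l (drop i v) | i <- iota 0 (size v).+1, l <- iota 0 (size v).+1].

(* x is right-maximal in v: xa and xb are substrings for symbols a <> b
   (any such symbols occur in v) *)
Definition right_maximal (v x : seq nat) : bool :=
  [exists a : 'I_(size v), exists b : 'I_(size v),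
     let ca := nth 0 v a in let cb := nth 0 v b in
     [&& ca != cb, infix (rcons x ca) v & infix (rcons x cb) v]].

Definition right_extension (v y : seq nat) : bool :=
  [&& size y > 0, right_maximal v (take (size y).-1 y) & infix y v].

Definition suffixient (v : seq nat) (S : {set 'I_(size v)}) : bool :=
  all (fun y => right_extension v y ==>
                [exists j in S, suffix y (take (nat_of_ord j).+1 v)])
      (substrings v).

Definition chi (V : seq bool) : nat :=
  let v := dollar V in
  \big[minn/size v]_(S : {set 'I_(size v)} | suffixient S) #|S|.

(* Over F_2 the shift register F realises the recurrence a(t+k) = a(t) + a(t+1),
   whose characteristic polynomial is x^k + x + 1.  Primitivity makes F cycle
   through all 2^k - 1 nonzero states, and F' splices 0^k into that cycle, so
   every k-bit word is exactly one cyclic window of w, of M_k and of U_k, and a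
   factor of V_k.  Each k-bit word is then a right-extension of V$ (its prefix
   of length k-1 is followed by both bits), and a suffixient set needs a
   distinct position for each, whence 2^k <= chi(V_k) <= |V$| = 2^k + k.
   Apart from the k rotations starting in the final 0^(k-1)$, the rotations of
   V$ are sorted like their leading k-bit windows, i.e. in binary order, and up
   to three exceptions the bit preceding a window is the XNOR of its last two
   bits.  Along the binary order this value changes at every other step, so the
   BWT is within Hamming distance k + 3 of a word with 2^(k-1) + 1 runs, whence
   r(V_k) = 2^(k-1) + O(k) and chi/r tends to 2. *)

From mathcomp Require Import all_boot all_order all_algebra.
From mathcomp Require Import zify ring lra.
Import Order.TTheory GRing.Theory Num.Theory.
Set Implicit Arguments. Unset Strict Implicit. Unset Printing Implicit Defensive.

(** * Shift registers *)

Section ShiftMap.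
Variables (k : nat) (G : seq bool -> seq bool).
Hypothesis k_gt0 : 0 < k.
Hypothesis G_shift : forall y, size y = k -> G y = rcons (behead y) (last false (G y)).

Lemma size_shift_map y : size y = k -> size (G y) = k.
Proof. by move=> sy; rewrite G_shift // size_rcons size_behead sy prednK. Qed.

Lemma size_iter_shift_map x t : size x = k -> size (iter t G x) = k.
Proof. by move=> sx; elim: t => //= t IH; rewrite size_shift_map. Qed.

Lemma nth_shift_map y j : size y = k -> j < k.-1 -> nth false (G y) j = nth false y j.+1.
Proof. by move=> sy hj; rewrite G_shift // nth_rcons size_behead sy hj nth_behead. Qed.

Lemma nth_iter_shift_map x t j : size x = k -> j < k ->
  nth false (iter t G x) j = head false (iter (t + j) G x).
Proof.
move=> sx; elim: j t => [|j IH] t hj; first by rewrite addn0 nth0.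
rewrite -nth_shift_map ?size_iter_shift_map //; last by lia.
by rewrite -iterS IH ?addSnnS //; lia.
Qed.

Lemma last_shift_map y : size y = k -> last false (G y) = nth false (G y) k.-1.
Proof. by move=> sy; rewrite G_shift // last_rcons nth_rcons size_behead sy ltnn eqxx. Qed.

End ShiftMap.

Lemma Fstate_shift y : Fstate y = rcons (behead y) (last false (Fstate y)).
Proof. by rewrite /Fstate last_rcons. Qed.

Lemma rcons_nseq (T : Type) n (a : T) : rcons (nseq n a) a = nseq n.+1 a.
Proof. by elim: n => //= n ->. Qed.

Lemma Fprime_shift k y : size y = k -> Fprime k y = rcons (behead y) (last false (Fprime k y)).
Proof.
move=> sy; rewrite /Fprime; case: eqP => [->|_]; first by rewrite last_rcons; case: (k).
case: eqP => [y1|_]; last exact: Fstate_shift.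
case: k sy y1 => [|m] sy y1; first by rewrite y1 in sy.
by rewrite y1 -rcons_nseq last_rcons.
Qed.

(** * Linear recurrences *)

Section ShiftOperator.
Local Open Scope ring_scope.
Variables (R : nzRingType) (s : nat -> R).

(* [(q(E) s)(t)] for the shift operator [E s = s \o succn]. *)
Definition shift_eval (q : {poly R}) t := \sum_(i < size q) q`_i * s (t + i)%N.

Lemma shift_eval_widen (q : {poly R}) t m : (size q <= m)%N ->
  shift_eval q t = \sum_(i < m) q`_i * s (t + i)%N.
Proof.
move=> hm; rewrite /shift_eval -!(big_mkord xpredT (fun i => q`_i * s (t + i)%N)).
rewrite (big_cat_nat (leq0n _) hm) /= [X in _ = _ + X]big1_seq ?addr0 //.
by move=> i /andP[_]; rewrite mem_iota => /andP[h _]; rewrite nth_default // mul0r.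
Qed.

Lemma shift_evalD (q1 q2 : {poly R}) t : shift_eval (q1 + q2) t = shift_eval q1 t + shift_eval q2 t.
Proof.
pose m := maxn (size q1) (size q2).
rewrite (@shift_eval_widen _ _ m) ?(leq_trans (size_polyD _ _)) //.
rewrite (@shift_eval_widen q1 _ m) ?leq_maxl // (@shift_eval_widen q2 _ m) ?leq_maxr //.
by rewrite -big_split; apply: eq_bigr => i _; rewrite coefD mulrDl.
Qed.

Lemma shift_evalCM c (q : {poly R}) t : shift_eval (c%:P * q) t = c * shift_eval q t.
Proof.
rewrite (@shift_eval_widen _ _ (size q)); last first.
  by rewrite mul_polyC (leq_trans (size_scale_leq _ _)).
by rewrite mulr_sumr; apply: eq_bigr => i _; rewrite coefCM mulrA.
Qed.

Lemma shift_evalXM (q : {poly R}) t : shift_eval ('X * q) t = shift_eval q t.+1.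
Proof.
rewrite (@shift_eval_widen _ _ (size q).+1); last first.
  by rewrite (leq_trans (size_polyMleq _ _)) // size_polyX.
rewrite big_ord_recl coefXM eqxx mul0r add0r.
by apply: eq_bigr => i _; rewrite coefXM /= addnS.
Qed.

Lemma shift_eval0 t : shift_eval 0 t = 0.
Proof. by rewrite /shift_eval size_poly0 big_ord0. Qed.

Lemma shift_eval1 t : shift_eval 1 t = s t.
Proof. by rewrite /shift_eval size_poly1 big_ord1 coef1 mul1r addn0. Qed.

Lemma shift_evalXn n t : shift_eval 'X^n t = s (t + n)%N.
Proof.
elim: n t => [|n IH] t; first by rewrite expr0 shift_eval1 addn0.
by rewrite exprS shift_evalXM IH addSnnS.
Qed.

Lemma shift_evalXnsub1 n t : shift_eval ('X^n - 1) t = s (t + n)%N - s t.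
Proof. by rewrite shift_evalD shift_evalXn -mulN1r -polyCN shift_evalCM shift_eval1 mulN1r. Qed.

Lemma shift_eval_mull (m : {poly R}) : (forall t, shift_eval m t = 0) ->
  forall v t, shift_eval (v * m) t = 0.
Proof.
move=> hm v; elim/poly_ind: v m hm => [|v c IH] m hm t; first by rewrite mul0r shift_eval0.
rewrite mulrDl shift_evalD shift_evalCM hm mulr0 addr0 -mulrA; apply: IH => t'.
by rewrite shift_evalXM.
Qed.

End ShiftOperator.

Section ShiftOperatorField.
Local Open Scope ring_scope.
Variables (F : fieldType) (s : nat -> F).

Lemma shift_eval_coprime (p q : {poly F}) : coprimep p q ->
  (forall t, shift_eval s p t = 0) -> (forall t, shift_eval s q t = 0) -> forall t, s t = 0.
Proof.
move=> /Bezout_coprimepP [[u v]]; rewrite -size_poly_eq1 => /eqP /= Bezout hp hq t.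
have Bc := size1_polyC (eq_leq Bezout); set c := _`_0 in Bc.
have c0 : c != 0 by apply: contra_eqN Bezout; rewrite Bc => /eqP ->; rewrite size_poly0.
have : shift_eval s (c%:P * 1) t = 0.
  by rewrite mulr1 -Bc shift_evalD (shift_eval_mull hp) (shift_eval_mull hq) addr0.
by rewrite shift_evalCM shift_eval1 => /eqP; rewrite mulf_eq0 (negPf c0) => /eqP.
Qed.

End ShiftOperatorField.

Lemma F2_natr_addb (a b : bool) : ((a (+) b)%:R : 'F_2)%R = (a%:R + b%:R)%R.
Proof. by case: a; case: b => //=; apply/eqP. Qed.

Lemma F2_natr_inj : injective (fun b : bool => (b%:R : 'F_2)%R).
Proof. by case; case => // /eqP. Qed.

Lemma size_trinomial k : 1 < k -> size (trinomial k) = k.+1.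
Proof.
by move=> k1; rewrite /trinomial -addrA -polyC1 size_polyDl ?size_polyXn ?size_XaddC.
Qed.

(** * Binary words and windows *)

Fixpoint bits (n m : nat) : seq bool :=
  if n is n'.+1 then rcons (bits n' m./2) (odd m) else [::].

Definition bits_val (y : seq bool) : nat := foldl (fun a (b : bool) => a.*2 + b) 0 y.

Lemma size_bits n m : size (bits n m) = n.
Proof. by elim: n m => //= n IH m; rewrite size_rcons IH. Qed.

Lemma bits_val_rcons y b : bits_val (rcons y b) = (bits_val y).*2 + b.
Proof. by rewrite /bits_val -cats1 foldl_cat. Qed.

Lemma bitsK n m : m < 2 ^ n -> bits_val (bits n m) = m.
Proof.
elim: n m => [|n IH] m /=; first by case: m.
rewrite expnS => hm; rewrite bits_val_rcons IH; last by rewrite -divn2 ltn_divLR //; lia.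
by rewrite -{3}(odd_double_half m) addnC.
Qed.

Lemma bits_valK y : bits (size y) (bits_val y) = y.
Proof.
elim/last_ind: y => //= y b IH; rewrite size_rcons /= bits_val_rcons.
by rewrite addnC half_bit_double IH oddD odd_double addbF oddb.
Qed.

Lemma bits_val_lt y : bits_val y < 2 ^ size y.
Proof.
elim/last_ind: y => //= y b IH.
by rewrite bits_val_rcons size_rcons expnS; case: b => /=; lia.
Qed.

Lemma bits0 n : bits n 0 = nseq n false.
Proof. by elim: n => //= n ->; rewrite rcons_nseq. Qed.

(* In increasing binary, hence lexicographic, order. *)
Definition words k := [seq bits k m | m <- iota 0 (2 ^ k)].

Lemma size_words k : size (words k) = 2 ^ k.
Proof. by rewrite size_map size_iota. Qed.

Lemma words_uniq k : uniq (words k).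
Proof.
rewrite map_inj_in_uniq ?iota_uniq // => m m'; rewrite !mem_iota /= !add0n => hm hm' e.
by rewrite -(bitsK hm) e bitsK.
Qed.

Lemma mem_words k y : (y \in words k) = (size y == k).
Proof.
apply/mapP/eqP => [[m _ ->]|<-]; first exact: size_bits.
by exists (bits_val y); rewrite ?bits_valK // mem_iota add0n bits_val_lt.
Qed.

Section CyclicWindows.
Variable T : eqType.

Definition cyclic_window m (s : seq T) t := take m (rot t s).
Definition cyclic_windows m (s : seq T) := [seq cyclic_window m s t | t <- iota 0 (size s)].

Lemma mem_cyclic_windows_rot m s q : q <= size s ->
  cyclic_windows m (rot q s) =i cyclic_windows m s.
Proof.
suff sub q' s' : q' <= size s' -> {subset cyclic_windows m (rot q' s') <= cyclic_windows m s'}.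
  move=> hq y; apply/idP/idP; first exact: sub.
  by rewrite -{1}(rotK q s) /rotr; apply: sub; rewrite size_rot leq_subr.
move=> hq y /mapP [t]; rewrite mem_iota add0n size_rot => ht ->.
rewrite /cyclic_window rot_add_mod ?(ltnW ht) //.
apply/mapP; case: (ltngtP (t + q') (size s')) => h.
- by exists (t + q'); rewrite ?mem_iota ?add0n.
- by exists (t + q' - size s'); first by rewrite mem_iota add0n; lia.
- by exists 0; rewrite ?mem_iota /cyclic_window ?h ?rot_size ?rot0 //; lia.
Qed.

Lemma cyclic_windows_rev m s y : m <= size s ->
  y \in cyclic_windows m s -> rev y \in cyclic_windows m (rev s).
Proof.
move=> hm /mapP [t]; rewrite mem_iota add0n => ht ->.
set n := size s; set Z := rot (n - t) (rev s).
have sZ : size Z = n by rewrite size_rot size_rev.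
have -> : rev (cyclic_window m s t) = cyclic_window m Z (n - m).
  have -> : cyclic_window m s t = take (size (rot t s) - (n - m)) (rot t s).
    by rewrite size_rot -/n; congr take; lia.
  rewrite -drop_rev rev_rot /rotr size_rev -/n -/Z.
  by rewrite /cyclic_window /rot take_size_cat // size_drop sZ; lia.
rewrite -(@mem_cyclic_windows_rot m (rev s) (n - t)); last by rewrite size_rev; lia.
rewrite -(@mem_cyclic_windows_rot m Z (n - m)); last by rewrite sZ leq_subr.
apply/mapP; exists 0; last by rewrite /cyclic_window rot0.
by rewrite mem_iota size_rot sZ; lia.
Qed.

End CyclicWindows.

Lemma cyclic_windows_map (T1 T2 : eqType) (f : T1 -> T2) m s :
  cyclic_windows m (map f s) = map (map f) (cyclic_windows m s).
Proof.
rewrite /cyclic_windows size_map -map_comp; apply: eq_map => t.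
by rewrite /cyclic_window /= map_take map_rot.
Qed.

Lemma last_rot (T : Type) (x0 : T) i s : 0 < i <= size s -> last x0 (rot i s) = nth x0 s i.-1.
Proof.
move=> /andP [i0 hi]; rewrite /rot last_cat.
by rewrite -(prednK i0) (take_nth x0) ?last_rcons // prednK.
Qed.

Lemma sorted_map_iota (T : Type) (r : rel T) (f : nat -> T) a b :
  (forall i, a <= i -> i.+1 < a + b -> r (f i) (f i.+1)) -> sorted r (map f (iota a b)).
Proof.
elim: b a => [|[|b] IH] a h //=.
rewrite h; [|lia|lia].
by have /= -> // := IH a.+1; move=> i hi hib; apply: h; lia.
Qed.

Lemma infix_take_drop (T : eqType) (s : seq T) m i : infix (take m (drop i s)) s.
Proof. by rewrite -{2}(cat_take_drop i s) -{2}(cat_take_drop m (drop i s)) infix_infix. Qed.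

Lemma suffix_drop (T : eqType) (y t : seq T) : suffix y t -> y = drop (size t - size y) t.
Proof. by case/suffixP => t' ->; rewrite size_cat addnK drop_size_cat. Qed.

Lemma count_mem_le_size (T : eqType) (E s : seq T) : uniq s -> count (mem E) s <= size E.
Proof.
move=> us; rewrite -size_filter; apply: uniq_leq_size; first exact: filter_uniq.
by move=> x; rewrite mem_filter => /andP [].
Qed.

Lemma ltSn_exp2 k : 1 < k -> k.+1 < 2 ^ k.
Proof.
case: k => [|[|m]] // _; have := ltn_expl m.+1 (ltnSn 1).
by rewrite (expnS 2 m.+1); lia.
Qed.

(** * Lexicographic order, runs and Hamming distance *)

Lemma lexle_total : total lexle.
Proof. by elim=> [|a s IH] [|b t] //=; case: (ltngtP a b) => //= _; apply: IH. Qed.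

Lemma lexle_trans : transitive lexle.
Proof.
elim=> [|b t IH] [|a s] [|c u] //=.
case/orP => [h1|/andP [/eqP -> h1]]; case/orP => [h2|/andP [/eqP e2 h2]].
- by rewrite (ltn_trans h1 h2).
- by rewrite -e2 h1.
- by rewrite h2.
- by rewrite e2 eqxx (IH _ _ h1 h2) orbT.
Qed.

Lemma lexle_anti : antisymmetric lexle.
Proof.
elim=> [|a s IH] [|b t] //=.
case/andP => /orP [h1|/andP [/eqP e1 h1]] /orP [h2|/andP [/eqP e2 h2]].
- by have := ltn_trans h1 h2; rewrite ltnn.
- by move: h1; rewrite e2 ltnn.
- by move: h2; rewrite e1 ltnn.
- by rewrite e1 (IH t) // h1 h2.
Qed.

(* Strict comparison at the first position where both sequences are defined
   and differ; unlike [lexle], a proper prefix is not [lexlt]-smaller. *)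
Fixpoint lexlt (s t : seq nat) : bool :=
  match s, t with
  | a :: s', b :: t' => (a < b) || ((a == b) && lexlt s' t')
  | _, _ => false
  end.

Lemma lexlt_cat u u' s t : lexlt u u' -> lexle (u ++ s) (u' ++ t).
Proof.
elim: u u' => [|a u IH] [|b u'] //=.
by case/orP => [->//|/andP [-> h]]; rewrite IH ?orbT.
Qed.

Lemma lexlt_rcons u u' a b : size u = size u' -> lexlt u u' -> lexlt (rcons u a) (rcons u' b).
Proof.
elim: u u' => [|c u IH] [|d u'] //= [e].
by case/orP => [->//|/andP [-> h]]; rewrite IH ?orbT.
Qed.

Lemma lexlt_rcons2 u a b : a < b -> lexlt (rcons u a) (rcons u b).
Proof. by move=> h; elim: u => [|c u IH] /=; rewrite ?h // eqxx IH orbT. Qed.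

Lemma lexle_catl u a b s t : a < b -> lexle (u ++ a :: s) (u ++ b :: t).
Proof. by move=> h; elim: u => [|c u IH] /=; rewrite ?h // eqxx IH orbT. Qed.

Lemma lexlt_bitsS n m : m.+1 < 2 ^ n -> lexlt (map sym (bits n m)) (map sym (bits n m.+1)).
Proof.
elim: n m => [|n IH] m /=; first by case: m.
rewrite expnS !map_rcons uphalf_half => hm.
case: (boolP (odd m)) => hodd /=; last by apply: lexlt_rcons2.
rewrite add1n; apply: lexlt_rcons; first by rewrite !size_map !size_bits.
by apply: IH; move: hm; rewrite -{1}(odd_double_half m) hodd; lia.
Qed.

Definition hamming (s t : seq nat) := count (fun i => nth 0 s i != nth 0 t i) (iota 0 (size s)).

Lemma hammingC s t : size s = size t -> hamming s t = hamming t s.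
Proof. by move=> h; rewrite /hamming h; apply: eq_count => i /=; rewrite eq_sym. Qed.

Lemma hamming_map (T : Type) (x0 : T) (f g : T -> nat) (e : seq T) :
  hamming (map f e) (map g e) = count (fun z => f z != g z) e.
Proof.
rewrite /hamming size_map -[in RHS](mkseq_nth x0 e) /mkseq count_map.
by apply: eq_in_count => i; rewrite mem_iota add0n /= => hi; rewrite !(nth_map x0).
Qed.

Lemma count_predn (d : pred nat) n :
  count (fun i => (0 < i) && d i.-1) (iota 0 n) <= count d (iota 0 n).
Proof.
case: n => [|n] //.
have -> : count (fun i => (0 < i) && d i.-1) (iota 0 n.+1) = count d (iota 0 n).
  by rewrite /= add0n (iotaDl 1 0 n) count_map.
by rewrite -addn1 iotaD count_cat leq_addr.
Qed.

(* Each mismatch at position [i] can create or destroy a run boundary only at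
   [i] and [i + 1]. *)
Lemma runs_le_hamming s t : size s = size t -> runs s <= runs t + 2 * hamming s t.
Proof.
move=> hst; rewrite /runs /hamming -hst mul2n -addnn.
set d := fun i => nth 0 s i != nth 0 t i.
set d' := fun i => (0 < i) && d i.-1.
set Ps := fun i => (i == 0) || (nth 0 s i.-1 != nth 0 s i).
set Pt := fun i => (i == 0) || (nth 0 t i.-1 != nth 0 t i).
set I := iota 0 (size s).
have count_predU (a b : pred nat) : count (predU a b) I <= count a I + count b I.
  by rewrite -count_predUI leq_addr.
have boundary : count Ps I <= count (predU Pt (predU d d')) I.
  apply: sub_count => -[|i] //=; rewrite /Ps /Pt /d /d' /=.
  case: eqP => //= e1; case: eqP => //= e2; case: eqP => //= e3 _.
  by apply/eqP => e4; apply: e1; rewrite e4 e2 e3.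
apply: (leq_trans boundary); apply: (leq_trans (count_predU _ _)).
rewrite leq_add2l; apply: (leq_trans (count_predU _ _)).
by rewrite leq_add2l count_predn.
Qed.

Lemma runs_map_iota (f : nat -> nat) n :
  runs (map f (iota 0 n.+1)) = (count (fun i => f i != f i.+1) (iota 0 n)).+1.
Proof.
rewrite /runs size_map size_iota; set s := map f _.
have nth_s j : j < n.+1 -> nth 0 s j = f j by move=> hj; rewrite (nth_map 0) ?size_iota ?nth_iota.
rewrite -[n.+1]add1n iotaD count_cat /= add1n (iotaDl 1 0 n) count_map; congr _.+1.
apply: eq_in_count => i; rewrite mem_iota /= add0n => hi.
by rewrite add0n nth_s ?(nth_map 0) ?size_iota ?nth_iota ?add1n //; lia.
Qed.

Definition xnor_low m := ~~ (odd m./2 (+) odd m).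

Lemma xnor_lowS j : (xnor_low j != xnor_low j.+1) = odd j.+1.
Proof. by rewrite /xnor_low -uphalfE uphalf_half !oddS oddD; case: (odd j); case: (odd j./2). Qed.

Lemma count_oddS_iota X : count (fun j => odd j.+1) (iota 0 (2 * X)) = X.
Proof.
elim: X => [|X IH] //; rewrite mulnS -addn2 addnC iotaD count_cat IH /= add0n oddM /=.
by case: (odd X) => /=; lia.
Qed.

(** * The string V$ *)

Lemma sym_inj : injective sym.
Proof. by case; case. Qed.

Lemma size_dollar V : size (dollar V) = (size V).+1.
Proof. by rewrite size_rcons size_map. Qed.

Lemma nth_dollar V i : i < size V -> nth 0 (dollar V) i = sym (nth false V i).
Proof. by move=> hi; rewrite nth_rcons size_map hi (nth_map false). Qed.

Lemma drop_dollar V j : j <= size V -> drop j (dollar V) = map sym (drop j V) ++ [:: 0].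
Proof.
move=> hj; rewrite /dollar -cats1 drop_cat size_map.
case: ltngtP hj => // h _; first by rewrite map_drop.
by rewrite h subnn drop0 drop_oversize // size_map h.
Qed.

Lemma mem_substrings (v : seq nat) i l : i <= size v -> l <= size v ->
  take l (drop i v) \in substrings v.
Proof.
by move=> hi hl; apply: (allpairs_f (fun i l => take l (drop i v))); rewrite mem_iota ltnS.
Qed.

Lemma chi_le_size V : chi V <= size (dollar V).
Proof.
apply: (big_ind (fun x => x <= size (dollar V))) => //.
- by move=> x y hx _; rewrite geq_min hx.
- by move=> S _; rewrite (leq_trans (max_card _)) // card_ord.
Qed.

(** * The de Bruijn word of a primitive trinomial *)

Section PrimitiveTrinomial.
Variable k : nat.
Hypothesis k_gt1 : 1 < k.
Hypothesis prim : primitive_poly (trinomial k).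
Let N := 2 ^ k - 1.
Let k_gt0 : 0 < k := ltnW k_gt1.

Let Fstate_shift_k y (_ : size y = k) := Fstate_shift y.

Lemma size_iter_Fstate x t : size x = k -> size (iter t Fstate x) = k.
Proof. exact: size_iter_shift_map k_gt0 Fstate_shift_k x t. Qed.

Lemma nth_iter_Fstate x t j : size x = k -> j < k ->
  nth false (iter t Fstate x) j = head false (iter (t + j) Fstate x).
Proof. exact: nth_iter_shift_map k_gt0 Fstate_shift_k x t j. Qed.

Definition lfsr_output (x : seq bool) t : 'F_2 := ((head false (iter t Fstate x))%:R)%R.

Lemma lfsr_output_rec x t : size x = k ->
  lfsr_output x (t + k) = (lfsr_output x t + lfsr_output x t.+1)%R.
Proof.
move=> sx; rewrite /lfsr_output (_ : t + k = t.+1 + k.-1); last by lia.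
rewrite -nth_iter_Fstate ?prednK // iterS.
have sy := size_iter_Fstate t sx; set y := iter t Fstate x in sy *.
rewrite {1}/Fstate nth_rcons size_behead sy ltnn eqxx F2_natr_addb.
by rewrite -!nth0 (nth_shift_map Fstate_shift_k) // -(subnKC k_gt1).
Qed.

Lemma shift_eval_trinomial x t : size x = k ->
  shift_eval (lfsr_output x) (trinomial k) t = 0%R.
Proof.
move=> sx; rewrite /trinomial !shift_evalD shift_evalXn -(expr1 'X) shift_evalXn.
have F2 : (2 \in [pchar 'F_2])%R by apply: pchar_Fp.
by rewrite shift_eval1 lfsr_output_rec // addn1 -!addrA addKr_pchar2 // addrr_pchar2.
Qed.

Lemma iter_Fstate_id x n : size x = k ->
  (iter n Fstate x = x) <-> (forall t, lfsr_output x (t + n) = lfsr_output x t).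
Proof.
move=> sx; split=> [h t|h]; first by rewrite /lfsr_output iterD h.
apply: (@eq_from_nth _ false) => [|j]; rewrite size_iter_Fstate // => hj.
change (nth false (iter n Fstate x) j = nth false (iter 0 Fstate x) j).
rewrite !nth_iter_Fstate // add0n.
by apply: F2_natr_inj; have := h j; rewrite /lfsr_output addnC.
Qed.

Lemma iter_Fstate_period x : size x = k -> iter N Fstate x = x.
Proof.
move=> sx; apply/iter_Fstate_id => // t.
have [_ /dvdpP [v hv] _] := prim; rewrite size_trinomial // in hv.
apply/eqP; rewrite -subr_eq0 -shift_evalXnsub1 -/N hv; apply/eqP.
by apply: shift_eval_mull => t'; apply: shift_eval_trinomial.
Qed.

(* A period 0 < n < N would make 'X^n - 1 annihilate the output of [x]; being
   irreducible and, by primitivity, not a divisor of 'X^n - 1, the trinomial is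
   coprime to it, so the output vanishes. *)
Lemma iter_Fstate_neq x n : size x = k -> x != nseq k false -> 0 < n < N ->
  iter n Fstate x != x.
Proof.
move=> sx x0 hn; apply: contra x0 => /eqP /(iter_Fstate_id _ sx) hper.
have [irr _ hno] := prim; rewrite size_trinomial //= in hno.
have ann t : shift_eval (lfsr_output x) ('X^n - 1) t = 0%R.
  by rewrite shift_evalXnsub1 hper subrr.
have cop : coprimep (trinomial k) ('X^n - 1).
  have [g1|gp] := irredp_XsubCP irr (dvdp_gcdl (trinomial k) ('X^n - 1)).
    by rewrite -gcdp_eqp1.
  by have := hno n hn; rewrite -(eqp_dvdl _ gp) dvdp_gcdr.
have zero := shift_eval_coprime cop (fun t => shift_eval_trinomial t sx) ann.
apply/eqP/(@eq_from_nth _ false) => [|j]; rewrite sx ?size_nseq // => hj.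
rewrite nth_nseq hj; change (nth false (iter 0 Fstate x) j = false).
rewrite nth_iter_Fstate // add0n.
by apply: F2_natr_inj; rewrite -/(lfsr_output x j) zero.
Qed.

Let D := 2 ^ k.
Let z0 := nseq k false.
Let succ0 := rcons (nseq k.-1 false) true.
Let pred0 := true :: nseq k.-1 false.

Lemma D_eq : D = N.+1.
Proof. by have := ltSn_exp2 k_gt1; rewrite /N -/D; lia. Qed.

Lemma size_succ0 : size succ0 = k.
Proof. by rewrite size_rcons size_nseq prednK. Qed.

Lemma succ0_neq0 : succ0 != z0.
Proof.
apply/eqP => /(congr1 (nth false ^~ k.-1)).
by rewrite nth_rcons size_nseq ltnn eqxx nth_nseq if_same.
Qed.

Lemma pred0_neq0 : pred0 != z0.
Proof. by rewrite /pred0 /z0 -(prednK k_gt0). Qed.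

Lemma Fstate_inj y y' : size y = k -> size y' = k -> Fstate y = Fstate y' -> y = y'.
Proof.
move=> sy sy'; rewrite /Fstate => /rcons_inj [hb hc].
case: y sy hb hc => [|a y] sy; first by move: sy k_gt1 => <-.
case: y' sy' => [|a' y'] sy'; first by move: sy' k_gt1 => <-.
move=> /= hb; subst y'; case: y sy sy' => [|c y] /= sy; first by move: sy k_gt1 => <-.
by case: a a' c => [] [] [].
Qed.

Lemma iter_Fstate_inj i y y' : size y = k -> size y' = k ->
  iter i Fstate y = iter i Fstate y' -> y = y'.
Proof.
move=> sy sy'; elim: i => //= i IH h; apply: IH.
by apply: Fstate_inj; rewrite ?size_iter_Fstate.
Qed.

Lemma iter_Fstate0 m : iter m Fstate z0 = z0.
Proof.
elim: m => //= m ->; rewrite /z0 /Fstate !nth_nseq -(prednK k_gt0) /=.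
by case: ifP => _; rewrite rcons_nseq.
Qed.

Lemma iter_Fstate_succ0_neq0 m : iter m Fstate succ0 != z0.
Proof.
apply: contra succ0_neq0 => /eqP h; apply/eqP/(@iter_Fstate_inj m); rewrite ?size_succ0 ?size_nseq //.
by rewrite h iter_Fstate0.
Qed.

Lemma Fstate_pred0 : Fstate pred0 = succ0.
Proof. by rewrite /pred0 /succ0 /Fstate /= nth_nseq -(subnKC k_gt1). Qed.

Lemma Fprime_Fstate y : y != z0 -> y != pred0 -> Fprime k y = Fstate y.
Proof. by move=> h1 h2; rewrite /Fprime -/z0 (negPf h1) -/pred0 (negPf h2). Qed.

Definition dB_state t := iter t (Fprime k) z0.

Lemma size_dB_state t : size (dB_state t) = k.
Proof. by rewrite (size_iter_shift_map k_gt0 (@Fprime_shift k)) ?size_nseq. Qed.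

Lemma dB_stateS j : j < N -> dB_state j.+1 = iter j Fstate succ0.
Proof.
elim: j => [|j IH] hj; first by rewrite /dB_state /= /Fprime eqxx.
rewrite /dB_state iterS -/(dB_state j.+1) IH 1?ltnW // Fprime_Fstate ?iter_Fstate_succ0_neq0 //.
have hne : iter j.+1 Fstate succ0 != succ0 by apply: iter_Fstate_neq size_succ0 succ0_neq0 _; rewrite ltn0Sn.
by apply: contraNneq hne => h; rewrite iterS h Fstate_pred0.
Qed.

Lemma dB_state_N : dB_state N = pred0.
Proof.
have N0 : 0 < N by rewrite /N subn_gt0 -/D (ltn_trans _ (ltSn_exp2 k_gt1)).
rewrite -(prednK N0) dB_stateS ?prednK //.
apply: (@iter_Fstate_inj 1).
- by rewrite size_iter_Fstate ?size_succ0.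
- by rewrite /pred0 /= size_nseq prednK.
- by rewrite /= Fstate_pred0 -iterS prednK // iter_Fstate_period ?size_succ0.
Qed.

Lemma dB_state_periodic t : dB_state (t + D) = dB_state t.
Proof.
rewrite /dB_state iterD -/(dB_state D) D_eq /dB_state iterS -/(dB_state N) dB_state_N.
by rewrite /Fprime -/z0 (negPf pred0_neq0) eqxx.
Qed.

Lemma dB_states_uniq : uniq [seq dB_state t | t <- iota 0 D].
Proof.
rewrite map_inj_in_uniq ?iota_uniq //.
suff neq i j : i < j -> j < D -> dB_state i != dB_state j.
  move=> i j; rewrite !mem_iota !add0n /= => hi hj h.
  case: (ltngtP i j) => // hij.
  - by move: (neq i j hij hj); rewrite h eqxx.
  - by move: (neq j i hij hi); rewrite h eqxx.
move=> hij; rewrite D_eq => hjD.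
rewrite -(prednK (leq_ltn_trans (leq0n i) hij)) dB_stateS; last by lia.
case: i hij => [|i] hij; first by rewrite eq_sym iter_Fstate_succ0_neq0.
rewrite dB_stateS; last by lia.
rewrite -(subnKC (_ : i <= j.-1)); last by lia.
rewrite iterD; apply: contra_neq (iter_Fstate_neq size_succ0 succ0_neq0 (n := j.-1 - i) _).
  by move/(iter_Fstate_inj size_succ0 (size_iter_Fstate _ size_succ0))/esym.
by apply/andP; split; lia.
Qed.

Lemma dB_state_surj y : size y = k -> exists2 t, t < D & dB_state t = y.
Proof.
move=> sy.
have sub : {subset [seq dB_state t | t <- iota 0 D] <= words k}.
  by move=> z /mapP [t _ ->]; rewrite mem_words size_dB_state.
have sz : size (words k) <= size [seq dB_state t | t <- iota 0 D].
  by rewrite size_words size_map size_iota.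
have [_ eqs] := uniq_min_size dB_states_uniq sub sz.
have : y \in [seq dB_state t | t <- iota 0 D] by rewrite eqs mem_words sy.
by case/mapP => t; rewrite mem_iota add0n => ht ->; exists t.
Qed.

Let D_gt : k.+1 < D := ltSn_exp2 k_gt1.

Definition dB_bit t := head false (dB_state t).

Lemma nth_dB_state t j : j < k -> nth false (dB_state t) j = dB_bit (t + j).
Proof. by move=> hj; rewrite /dB_state (nth_iter_shift_map k_gt0 (@Fprime_shift k)) ?size_nseq. Qed.

Lemma dB_bit_periodic t : dB_bit (t + D) = dB_bit t.
Proof. by rewrite /dB_bit dB_state_periodic. Qed.

Lemma size_wdB : size (wdB k) = D.
Proof. by rewrite size_map size_iota. Qed.

Lemma nth_rot_wdB t j : t < D -> j < D -> nth false (rot t (wdB k)) j = dB_bit (t + j).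
Proof.
have nth_wdB i : i < D -> nth false (wdB k) i = dB_bit i.
  by move=> hi; rewrite (nth_map 0) ?size_iota // nth_iota.
move=> ht hj; rewrite /rot nth_cat size_drop size_wdB; case: ifP => h.
  by rewrite nth_drop nth_wdB //; lia.
rewrite nth_take ?nth_wdB; try lia.
by rewrite -dB_bit_periodic; congr dB_bit; lia.
Qed.

Lemma cyclic_window_wdB t m : t < D -> m <= D ->
  cyclic_window m (wdB k) t = mkseq (fun j => dB_bit (t + j)) m.
Proof.
move=> ht hm; apply: (@eq_from_nth _ false) => [|j].
  by rewrite size_take size_rot size_wdB size_mkseq; case: ltngtP hm => //; lia.
rewrite size_take size_rot size_wdB => hj.
have hjm : j < m by move: hj; case: ifP => //; lia.
by rewrite nth_take // nth_rot_wdB ?nth_mkseq //; lia.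
Qed.

Lemma cyclic_window_wdB_state t : t < D -> cyclic_window k (wdB k) t = dB_state t.
Proof.
move=> ht; rewrite cyclic_window_wdB //; last by lia.
apply: (@eq_from_nth _ false) => [|j]; rewrite size_mkseq ?size_dB_state // => hj.
by rewrite nth_mkseq // nth_dB_state.
Qed.

Lemma cyclic_window_wdB_next t : t < D ->
  cyclic_window k.+1 (wdB k) t = rcons (dB_state t) (last false (Fprime k (dB_state t))).
Proof.
move=> ht; rewrite cyclic_window_wdB //; last by lia.
apply: (@eq_from_nth _ false) => [|j]; rewrite size_mkseq ?size_rcons ?size_dB_state // => hj.
rewrite nth_mkseq // nth_rcons size_dB_state; case: (ltngtP j k) => [hjk|hkj|->].
- by rewrite nth_dB_state.
- by lia.
rewrite (last_shift_map (@Fprime_shift k)) ?size_dB_state //.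
by rewrite -iterS -/(dB_state t.+1) nth_dB_state ?prednK // addSnnS prednK.
Qed.

Lemma size_Mk : size (Mk k) = D.
Proof. by rewrite size_map size_rev size_wdB. Qed.

Lemma Mk_windows_all z : size z = k -> z \in cyclic_windows k (Mk k).
Proof.
move=> sz; have [|t ht hz] := dB_state_surj (y := rev (map negb z)).
  by rewrite size_rev size_map.
have : dB_state t \in cyclic_windows k (wdB k).
  by rewrite -cyclic_window_wdB_state //; apply/mapP; exists t; rewrite // mem_iota size_wdB.
move/cyclic_windows_rev; rewrite size_wdB /Mk cyclic_windows_map => /(_ (ltnW (ltnW D_gt))) h.
by apply/mapP; exists (rev (dB_state t)); rewrite // hz revK mapK //; apply: negbK.
Qed.

(* [M_k] is [w] reversed and complemented, so the bit before a window [z] of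
   [M_k] is the complement of the bit appended by [F'] to the state
   [rev (map negb z)] of [w]. *)
Definition prev_bit z := ~~ last false (Fprime k (rev (map negb z))).

Lemma Mk_windowS Y : Y \in cyclic_windows k.+1 (Mk k) ->
  exists2 z, size z = k & Y = prev_bit z :: z.
Proof.
rewrite /Mk cyclic_windows_map => /mapP [Y' /cyclic_windows_rev hY' ->].
move: hY'; rewrite size_rev size_wdB revK => /(_ (ltnW D_gt)) /mapP [t].
rewrite mem_iota size_wdB add0n => /andP [_ ht]; rewrite cyclic_window_wdB_next // => hY'.
exists (map negb (rev (dB_state t))); first by rewrite size_map size_rev size_dB_state.
by rewrite -[Y']revK hY' rev_rcons /prev_bit /= (mapK negbK) revK.
Qed.

Let zero_at i := take k (rot i (Mk k)) == nseq k false.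
Let q := find zero_at (iota 0 (size (Mk k))).

Lemma has_zero_window : has zero_at (iota 0 (size (Mk k))).
Proof.
have /mapP [t ht hz] := Mk_windows_all (size_nseq k false).
by apply/hasP; exists t; rewrite // /zero_at -/(cyclic_window k (Mk k) t) -hz.
Qed.

Lemma zero_window_lt : q < D.
Proof. by have := has_zero_window; rewrite has_find -/q size_iota size_Mk. Qed.

Lemma Uk_rot : Uk k = rot q (Mk k).
Proof. by []. Qed.

Lemma size_Uk : size (Uk k) = D.
Proof. by rewrite size_rot size_Mk. Qed.

Lemma take_Uk : take k (Uk k) = nseq k false.
Proof.
have := nth_find 0 has_zero_window; rewrite -/q nth_iota ?size_Mk ?zero_window_lt //.
by rewrite add0n => /eqP.
Qed.

Lemma Uk_windows_all z : size z = k -> z \in cyclic_windows k (Uk k).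
Proof.
by move=> sz; rewrite Uk_rot mem_cyclic_windows_rot ?Mk_windows_all // size_Mk ltnW ?zero_window_lt.
Qed.

Lemma Uk_windowS Y : Y \in cyclic_windows k.+1 (Uk k) ->
  exists2 z, size z = k & Y = prev_bit z :: z.
Proof.
by rewrite Uk_rot mem_cyclic_windows_rot => [/Mk_windowS|] //; rewrite size_Mk ltnW ?zero_window_lt.
Qed.

Lemma size_Vk : size (Vk k) = D + k.-1.
Proof. by rewrite size_cat size_take size_Uk; case: ifP; lia. Qed.

Lemma Vk_window i m : i < D -> i + m <= D + k.-1 -> m <= D ->
  take m (drop i (Vk k)) = cyclic_window m (Uk k) i.
Proof.
rewrite /Vk /cyclic_window; move: (Uk k) size_Uk => U sU hi hm hmD.
rewrite [rot i U]/rot drop_cat sU hi !take_cat size_drop sU; case: ifP => // _.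
by rewrite !take_takel //; lia.
Qed.

Lemma Vk_windows : [seq take k (drop i (Vk k)) | i <- iota 0 D] = cyclic_windows k (Uk k).
Proof.
rewrite /cyclic_windows size_Uk; apply/eq_in_map => i; rewrite mem_iota add0n => /andP [_ hi].
by apply: Vk_window => //; lia.
Qed.

Lemma nth_Vk_prev i : 0 < i < D -> nth false (Vk k) i.-1 = prev_bit (take k (drop i (Vk k))).
Proof.
move=> /andP [i0 hi].
have /Uk_windowS [z _ hz] : take k.+1 (drop i.-1 (Vk k)) \in cyclic_windows k.+1 (Uk k).
  rewrite Vk_window; try lia; apply/mapP; exists i.-1 => //.
  by rewrite mem_iota size_Uk; lia.
have -> : nth false (Vk k) i.-1 = head false (drop i.-1 (Vk k)) by rewrite -nth0 nth_drop addn0.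
have -> : drop i (Vk k) = behead (drop i.-1 (Vk k)) by rewrite -drop1 drop_drop add1n prednK.
move: hz; case: (drop i.-1 (Vk k)) (size_drop i.-1 (Vk k)) => [|c r] /=.
  by rewrite size_Vk => ?; lia.
by move=> _ [-> <-].
Qed.

Lemma drop_Vk : drop D (Vk k) = nseq k.-1 false.
Proof.
rewrite /Vk -size_Uk drop_size_cat // -(take_takel _ (leq_pred k)) take_Uk take_nseq //.
exact: leq_pred.
Qed.

Lemma take_Vk : take k (Vk k) = nseq k false.
Proof. by rewrite /Vk take_cat size_Uk (ltn_trans (ltnSn k) D_gt) take_Uk. Qed.

Definition xnor_tail z := ~~ (nth false z k.-2 (+) nth false z k.-1).

(* The exceptions are the states 0^k and 10^(k-1), where [F'] differs from [F]. *)
Lemma prev_bit_xnor_tail z : size z = k -> z != nseq k true ->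
  z != rcons (nseq k.-1 true) false -> prev_bit z = xnor_tail z.
Proof.
move=> sz h1 h2; rewrite /prev_bit /xnor_tail.
set y := rev (map negb z).
have zy : z = map negb (rev y) by rewrite /y revK (mapK negbK).
rewrite Fprime_Fstate.
- rewrite /Fstate last_rcons !nth_rev ?size_map ?sz; try lia.
  rewrite !(nth_map false) ?sz; try lia.
  have -> : k - 1 = k.-1 by lia.
  have -> : k - 2 = k.-2 by lia.
  by case: (nth false z k.-1); case: (nth false z k.-2).
- by apply: contraNneq h1 => y0; rewrite zy y0 rev_nseq map_nseq.
- by apply: contraNneq h2 => yl; rewrite zy yl /= rev_cons rev_nseq map_rcons map_nseq.
Qed.

Lemma xnor_tail_bits m : xnor_tail (bits k m) = xnor_low m.
Proof.
rewrite /xnor_tail /xnor_low -(subnKC k_gt1) /= !nth_rcons !size_rcons size_bits.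
by rewrite ltnn eqxx ltnSn ltnn eqxx.
Qed.

Let V := Vk k.
Let S := dollar V.
Let n := size S.
Let windows := [seq take k (drop i V) | i <- iota 0 D].

Definition window_pos z := index z windows.

Lemma mem_Vk_windows z : size z = k -> z \in windows.
Proof. by move=> sz; rewrite /windows Vk_windows Uk_windows_all. Qed.

Lemma window_pos_lt z : size z = k -> window_pos z < D.
Proof. by move=> sz; have := mem_Vk_windows sz; rewrite -index_mem size_map size_iota. Qed.

Lemma take_drop_window_pos z : size z = k -> take k (drop (window_pos z) V) = z.
Proof.
move=> sz; have := nth_index [::] (mem_Vk_windows sz); rewrite -/(window_pos z).
by rewrite (nth_map 0) ?size_iota ?window_pos_lt // nth_iota ?window_pos_lt.
Qed.

Lemma size_dollar_Vk : n = D + k.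
Proof. by rewrite /n size_dollar size_Vk; lia. Qed.

Lemma rot_dollar_tail j : j < k -> exists X, rot (n.-1 - j) S = nseq j 1 ++ 0 :: X.
Proof.
move=> hj; exists (take (n.-1 - j) S); rewrite /rot drop_dollar; last by rewrite size_dollar_Vk size_Vk; lia.
rewrite (_ : n.-1 - j = (k.-1 - j) + D); last by rewrite size_dollar_Vk; lia.
by rewrite -drop_drop drop_Vk drop_nseq (_ : k.-1 - (k.-1 - j) = j) ?map_nseq -?catA //; lia.
Qed.

Lemma rot_dollar_window z : size z = k -> exists X, rot (window_pos z) S = map sym z ++ X.
Proof.
move=> sz; rewrite /rot drop_dollar; last by have := window_pos_lt sz; rewrite size_Vk; lia.
rewrite -(cat_take_drop k (drop (window_pos z) V)) take_drop_window_pos // map_cat -!catA.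
by eexists.
Qed.

(* The [i]-th smallest rotation of [V$] starts at [sorted_start i]: first the
   [k] rotations [0^i $ ...], then those beginning with each k-bit word, in
   binary order. *)
Definition sorted_start i := if i < k then n.-1 - i else window_pos (bits k (i - k)).

Lemma sorted_rotations : sorted lexle [seq rot (sorted_start i) S | i <- iota 0 (k + D)].
Proof.
apply: sorted_map_iota => i _ hi; rewrite /sorted_start.
have nseqS j : nseq j.+1 1 = nseq j 1 ++ [:: 1] by rewrite -addn1 nseqD.
case: (ltngtP i.+1 k) => h.
- have [X1 ->] := rot_dollar_tail (ltnW h); have [X2 ->] := rot_dollar_tail h.
  by rewrite nseqS -catA; apply: lexle_catl.
- have [X1 ->] := rot_dollar_window (size_bits k (i - k)).
  have [X2 ->] := rot_dollar_window (size_bits k (i.+1 - k)).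
  by apply/lexlt_cat; rewrite (_ : i.+1 - k = (i - k).+1); [apply: lexlt_bitsS|]; lia.
- have -> : i.+1 - k = 0 by lia.
  have hik : i < k by rewrite -h.
  have [X1 ->] := rot_dollar_tail hik.
  have [X2 ->] := rot_dollar_window (size_bits k 0).
  by rewrite bits0 map_nseq -h nseqS -catA; apply: lexle_catl.
Qed.

Lemma sorted_start_lt i : i < k + D -> sorted_start i < n.
Proof.
rewrite /sorted_start size_dollar_Vk; case: ifP => h hi; first by lia.
by have := window_pos_lt (size_bits k (i - k)); lia.
Qed.

Lemma sorted_start_inj : {in iota 0 (k + D) &, injective sorted_start}.
Proof.
move=> i j; rewrite !mem_iota !add0n /= => hi hj; rewrite /sorted_start size_dollar_Vk.
have pos_lt m : window_pos (bits k m) < D by apply: window_pos_lt; rewrite size_bits.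
case: ifP => h1; case: ifP => h2; try by [lia | have := pos_lt (i - k); have := pos_lt (j - k); lia].
move=> eq_pos; have e2 : bits k (i - k) = bits k (j - k).
  by rewrite -(take_drop_window_pos (size_bits k (i - k))) eq_pos take_drop_window_pos // size_bits.
by have := congr1 bits_val e2; rewrite !bitsK -/D; lia.
Qed.

Lemma sort_rotations_dollar :
  sort lexle [seq rot i S | i <- iota 0 n] = [seq rot (sorted_start i) S | i <- iota 0 (k + D)].
Proof.
apply: (sorted_eq lexle_trans lexle_anti (sort_sorted lexle_total _) sorted_rotations).
rewrite perm_sort (map_comp (rot^~ S) sorted_start) perm_sym; apply: perm_map.
have uniq_starts : uniq (map sorted_start (iota 0 (k + D))).
  by rewrite map_inj_in_uniq ?iota_uniq //; exact: sorted_start_inj.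
apply: uniq_perm => //; first exact: iota_uniq.
have sub : {subset map sorted_start (iota 0 (k + D)) <= iota 0 n}.
  move=> x /mapP [i]; rewrite mem_iota add0n => /andP [_ hi] ->.
  by rewrite mem_iota add0n sorted_start_lt.
have [] := uniq_min_size uniq_starts sub; last by [].
by rewrite size_map !size_iota size_dollar_Vk addnC.
Qed.

Lemma bwt_dollar_Vk : bwt S = [seq last 0 (rot (sorted_start i) S) | i <- iota 0 (k + D)].
Proof. by rewrite /bwt -/n sort_rotations_dollar -map_comp. Qed.

Lemma last_rot_window z : size z = k -> z != nseq k false -> z != nseq k true ->
  z != rcons (nseq k.-1 true) false -> last 0 (rot (window_pos z) S) = sym (xnor_tail z).
Proof.
move=> sz h0 h1 h2; have pos_lt := window_pos_lt sz.
have pos_gt0 : 0 < window_pos z.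
  rewrite lt0n; apply: contraNneq h0 => p0.
  by rewrite -(take_drop_window_pos sz) p0 drop0 take_Vk.
rewrite last_rot; last by rewrite pos_gt0 -/n size_dollar_Vk; lia.
rewrite nth_dollar ?size_Vk; last by lia.
by rewrite nth_Vk_prev ?pos_gt0 // take_drop_window_pos // prev_bit_xnor_tail.
Qed.

(* The first [k] entries are chosen to extend the first run, not to agree with
   [bwt S]. *)
Definition bwt_model i := if i < k then 2 else sym (xnor_tail (bits k (i - k))).

(* Beyond the first k positions only the window 0^k, which starts [V] and is
   preceded by [$], and the two exceptions of [prev_bit_xnor_tail] can differ. *)
Lemma hamming_bwt_model : hamming (bwt S) (map bwt_model (iota 0 (k + D))) <= k + 3.
Proof.
rewrite bwt_dollar_Vk (hamming_map 0) iotaD count_cat leq_add //.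
  by rewrite (leq_trans (count_size _ _)) // size_iota.
rewrite add0n -{1}(addn0 k) (iotaDl k 0 D) count_map.
set E := [:: nseq k false; nseq k true; rcons (nseq k.-1 true) false].
apply: (@leq_trans (count (fun m => bits k m \in E) (iota 0 D))).
  apply: sub_count => m /=; rewrite /sorted_start /bwt_model ltnNge leq_addr /= addKn.
  apply: contraR; rewrite !inE !negb_or => /and3P [h0 h1 h2].
  by rewrite last_rot_window ?size_bits.
by have := count_mem_le_size E (words_uniq k); rewrite /words count_map.
Qed.

Lemma runs_bwt_model : runs (map bwt_model (iota 0 (k + D))) = (2 ^ k.-1).+1.
Proof.
have hD : D = 2 * 2 ^ k.-1 by rewrite /D -expnS prednK.
rewrite (_ : k + D = (k + (D - 1)).+1); last by lia.
rewrite runs_map_iota iotaD count_cat [0 + k]addnC (iotaDl k 0) count_map.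
have -> : count (fun i => bwt_model i != bwt_model i.+1) (iota 0 k) = 0.
  apply/eqP; rewrite -leqn0 leqNgt -has_count; apply/hasPn => i; rewrite mem_iota /= => hi.
  rewrite /bwt_model hi; case: ltnP => // hik.
  by rewrite (_ : i.+1 - k = 0) ?xnor_tail_bits //; lia.
rewrite add0n.
have -> : count (preim (addn k) (fun i => bwt_model i != bwt_model i.+1)) (iota 0 (D - 1))
        = count (fun j => odd j.+1) (iota 0 (D - 1)).
  apply: eq_count => j /=; rewrite /bwt_model ltnNge leq_addr ltnNge (leqW (leq_addr _ _)) /=.
  by rewrite -addnS !addKn (inj_eq sym_inj) !xnor_tail_bits xnor_lowS.
congr _.+1; rewrite -(count_oddS_iota (2 ^ k.-1)) -hD.
set m := D - 1; have Dm : D = m + 1 by rewrite /m; lia.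
have odd_m : odd m by move: (congr1 odd Dm); rewrite {1}hD oddM addn1 /= => /esym/negbFE.
by rewrite Dm iotaD count_cat add0n /= odd_m !addn0.
Qed.

Lemma take_dollar_window_pos z : size z = k -> take k (drop (window_pos z) S) = map sym z.
Proof.
move=> sz; have pos_lt := window_pos_lt sz.
rewrite drop_dollar ?size_Vk; last by lia.
rewrite takel_cat ?size_map ?size_drop ?size_Vk; last by lia.
by rewrite -map_take take_drop_window_pos.
Qed.

Lemma nth_dollar_window_pos z j : size z = k -> j < k ->
  nth 0 S (window_pos z + j) = sym (nth false z j).
Proof.
move=> sz hj; rewrite -nth_drop -(nth_take _ hj) take_dollar_window_pos //.
by rewrite (nth_map false) ?sz.
Qed.

Lemma right_extension_window z : size z = k -> right_extension S (map sym z).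
Proof.
move=> sz; rewrite /right_extension size_map sz k_gt0 -take_dollar_window_pos //.
rewrite infix_take_drop andbT take_dollar_window_pos // -map_take.
set x := take k.-1 z.
have sx b : size (rcons x b) = k by rewrite size_rcons size_takel ?sz ?leq_pred // prednK.
have at_end b : window_pos (rcons x b) + k.-1 < n.
  by have := window_pos_lt (sx b); rewrite size_dollar_Vk; lia.
have nth_end b : nth 0 S (window_pos (rcons x b) + k.-1) = sym b.
  by rewrite nth_dollar_window_pos ?prednK ?ltn_predL // nth_rcons size_takel ?sz ?leq_pred // ltnn eqxx.
apply/existsP; exists (Ordinal (at_end false)); apply/existsP; exists (Ordinal (at_end true)).
rewrite /= !nth_end /= -!map_rcons -!take_dollar_window_pos //.
by rewrite !infix_take_drop.
Qed.

(* Each k-bit word is a right-extension, hence the length-k factor of [S] ending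
   at some position of [P]; distinct words need distinct positions. *)
Lemma suffixient_card (P : {set 'I_n}) : suffixient P -> D <= #|P|.
Proof.
move=> suffP; pose ending_at (j : 'I_n) := drop (j.+1 - k) (take j.+1 S).
have ends z : size z = k -> map sym z \in [seq ending_at j | j <- enum P].
  move=> sz; have pos_lt := window_pos_lt sz.
  have /(allP suffP) : map sym z \in substrings S.
    by rewrite -take_dollar_window_pos // mem_substrings -/n // size_dollar_Vk; lia.
  rewrite right_extension_window //= => /existsP [j /andP [jP /suffix_drop hj]].
  apply/mapP; exists j; first by rewrite mem_enum.
  by rewrite hj size_map sz size_takel //; apply: ltn_ord.
have sub : {subset map (map sym) (words k) <= [seq ending_at j | j <- enum P]}.
  by move=> y /mapP [z]; rewrite mem_words => /eqP sz ->; apply: ends.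
have := uniq_leq_size _ sub; rewrite size_map size_words size_map -cardE; apply.
by rewrite map_inj_uniq ?words_uniq //; apply: inj_map sym_inj.
Qed.

Lemma chi_Vk_ge : D <= chi V.
Proof.
apply: (big_ind (fun x => D <= x)); last exact: suffixient_card.
- by rewrite -/S -/n size_dollar_Vk leq_addr.
- by move=> x y hx hy; rewrite leq_min hx hy.
Qed.

Lemma runs_bwt_Vk_bounds :
  (2 ^ k.-1).+1 <= r V + 2 * (k + 3) /\ r V <= (2 ^ k.-1).+1 + 2 * (k + 3).
Proof.
have sz : size (bwt S) = size (map bwt_model (iota 0 (k + D))) by rewrite bwt_dollar_Vk !size_map.
split.
  have := runs_le_hamming (esym sz); rewrite hammingC // runs_bwt_model => /leq_trans; apply.
  by rewrite leq_add2l leq_mul2l hamming_bwt_model.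
have := runs_le_hamming sz; rewrite runs_bwt_model => /leq_trans; apply.
by rewrite leq_add2l leq_mul2l hamming_bwt_model.
Qed.

End PrimitiveTrinomial.

(** * Asymptotics *)

Section RatioNearTwo.
Local Open Scope ring_scope.

Lemma ratio_near_two (F : realFieldType) (eps : F) (c R B d : nat) :
  (0 < R)%N -> (0 < B)%N -> (c <= 2 * R + B)%N -> (2 * R <= c + B)%N -> (B * d <= R)%N ->
  1 < eps * d%:R -> `|c%:R / R%:R - 2| < eps.
Proof.
move=> R0 B0 hc1 hc2 hBd hd; have RP : 0 < R%:R :> F by rewrite ltr0n.
have eps0 : 0 < eps by have := ler0n F d; nra.
have gap : B%:R < eps * R%:R.
  apply: (@lt_le_trans _ _ (eps * (B * d)%:R)); last by rewrite ler_pM2l // ler_nat.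
  by rewrite natrM mulrCA ltr_pMr ?ltr0n.
have -> : c%:R / R%:R - 2 = (c%:R - 2 * R%:R) / R%:R :> F by field; rewrite gt_eqF.
rewrite normrM normfV (gtr0_norm RP) ltr_pdivrMr // ltr_norml.
have hc1' : c%:R <= 2 * R%:R + B%:R :> F by rewrite -natrM -natrD ler_nat.
have hc2' : 2 * R%:R <= c%:R + B%:R :> F by rewrite -natrM -natrD ler_nat.
by apply/andP; split; lra.
Qed.

End RatioNearTwo.

Lemma chi_r_gap k : inP k ->
  chi (Vk k) <= 2 * r (Vk k) + (5 * k + 14) /\ 2 * r (Vk k) <= chi (Vk k) + (5 * k + 14).
Proof.
move=> [k_gt1 prim]; have [r_lb r_ub] := runs_bwt_Vk_bounds k_gt1 prim.
have chi_lb := chi_Vk_ge k_gt1 prim; have := chi_le_size (Vk k).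
have hD : 2 ^ k = 2 * 2 ^ k.-1 by rewrite -expnS prednK // ltnW.
rewrite size_dollar size_Vk // hD in chi_lb * => chi_ub.
split; lia.
Qed.

Lemma sq_le_exp2 k : 7 <= k -> k * k <= 2 ^ k.-1.
Proof.
elim: k => // k IH; rewrite leq_eqVlt => /orP [/eqP <- //|hk].
have := IH hk; have -> : 2 ^ k = 2 * 2 ^ k.-1 by rewrite -expnS prednK //; lia.
by rewrite /=; nia.
Qed.

Lemma r_Vk_large k d : inP k -> 7 * d + 20 <= k -> (5 * k + 14) * d <= r (Vk k).
Proof.
move=> [k_gt1 prim] hk; have [r_lb _] := runs_bwt_Vk_bounds k_gt1 prim.
have k7 : 7 <= k by lia.
have := sq_le_exp2 k7; have : k * (7 * d + 20) <= k * k by rewrite leq_mul2l hk orbT.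
by nia.
Qed.

Theorem theorem3 :
  forall eps : rat, (0 < eps)%R ->
  exists k0 : nat, forall k : nat, inP k -> k0 <= k ->
    (`| (chi (Vk k))%:R / (r (Vk k))%:R - 2 | < eps :> rat)%R.
Proof.
move=> eps eps_gt0; pose d := Num.Def.archi_bound eps^-1.
have hd : (1 < eps * d%:R)%R.
  have inv_gt0 : (0 < eps^-1)%R by rewrite invr_gt0.
  have := archi_boundP (ltW inv_gt0).
  by rewrite -/d -div1r ltr_pdivrMr // mulrC.
have d_gt0 : 0 < d by move: hd; case: (d) => //; rewrite mulr0 ltr10.
exists (7 * d + 20) => k hk hk0.
have [gap1 gap2] := chi_r_gap hk; have large := r_Vk_large hk hk0.
by apply: (ratio_near_two (B := 5 * k + 14) (d := d)) => //; nia.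
Qed.
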